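(* Fix integers $K\ge1$, $m_0\ge1$, a $p\times p$ matrix $G$, a threshold $\delta>0$, and $\epsilon>0$. Suppose the graph $\mathcal G^{*,\delta}$ is $K$-sparse, and that $\mathrm{sgn}(|\beta_1|),\dots,\mathrm{sgn}(|\beta_p|)$ are i.i.d. Bernoulli$(\epsilon)$. Then, except on an event of probability at most $p(e\epsilon K)^{m_0+1}$, $m_0^*(S(\beta),G,\delta)\le m_0$.
   Context: $\Omega^{*,\delta}(i,j)=G(i,j)1\{|G(i,j)|\ge\delta\}$; $\mathcal G^{*,\delta}$ is the graph on $\{1,\dots,p\}$ with an edge between $i\ne j$ iff $\Omega^{*,\delta}(i,j)\ne0$. A graph is $K$-sparse if its maximum degree is at most $K$. $S(\beta)=\{j:\beta_j\ne0\}$; $\mathcal G^{*,\delta}_S$ is the subgraph of $\mathcal G^{*,\delta}$ induced by $S(\beta)$, and $m_0^*(S(\beta),G,\delta)$ is the maximum number of nodes in a connected component of $\mathcal G^{*,\delta}_S$. *)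

From HB Require Import structures.
From mathcomp Require Import all_boot all_order all_algebra.
From mathcomp Require Import reals sequences exp.
Set Implicit Arguments. Unset Strict Implicit. Unset Printing Implicit Defensive.
Import Order.TTheory GRing.Theory Num.Theory.
Local Open Scope ring_scope.

Section Defs.
Variable R : realType.

Definition Omega_delta (p : nat) (G : 'M[R]_p) (delta : R) : 'M[R]_p :=
  \matrix_(i, j) (if delta <= `|G i j| then G i j else 0).

Definition gadj (p : nat) (G : 'M[R]_p) (delta : R) : rel 'I_p :=
  fun i j => (i != j) &&
    ((Omega_delta G delta i j != 0) || (Omega_delta G delta j i != 0)).

Definition K_sparse (p : nat) (G : 'M[R]_p) (delta : R) (K : nat) : Prop :=
  forall i : 'I_p, (#|[set j | gadj G delta i j]| <= K)%N.

Definition supp (p : nat) (beta : 'I_p -> R) : {set 'I_p} :=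
  [set j | beta j != 0].

Definition gadj_on (p : nat) (S : {set 'I_p}) (G : 'M[R]_p) (delta : R)
  : rel 'I_p :=
  fun i j => [&& i \in S, j \in S & gadj G delta i j].

(* m_0^*(S,G,delta): maximum number of nodes in a connected component of the
   induced subgraph G^{*,delta}_S (0 if S is empty) *)
Definition m0star (p : nat) (S : {set 'I_p}) (G : 'M[R]_p) (delta : R) : nat :=
  \max_(x in S) #|[set y | connect (gadj_on S G delta) x y]|.

End Defs.

From HB Require Import structures.
From mathcomp Require Import all_boot all_order all_algebra.
From mathcomp Require Import reals sequences exp.
From mathcomp Require Import zify ring lra.
Import Order.TTheory GRing.Theory Num.Theory.
Local Open Scope ring_scope.
Set Implicit Arguments. Unset Strict Implicit.

(* If S(beta) has a component with more than m0 nodes, then it contains a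
   connected set of n = m0+1 nodes through some vertex x, and each such set lies
   in S(beta) with probability eps^n; by a union bound it remains to show that
   there are at most (eK)^n connected n-sets through x. For a random q-biased
   set S, at most one connected n-set through x is contained in S and disjoint
   from its own boundary; each set does so with probability
   q^n (1-q)^|boundary| >= q^n (1-q)^((K-1)n). Taking q = 1/K and using
   (1 - 1/K)^(K-1) >= 1/e gives the count. *)

Lemma connect_preserve (T : finType) (e : rel T) (P : pred T) :
  (forall a b, e a b -> P a -> P b) ->
  forall x y, connect e x y -> P x -> P y.
Proof.
move=> eP x y /connectP[s es ->]; elim: s x es => //= b s IHs a /andP[eab es] Pa.
exact: IHs es (eP _ _ eab Pa).
Qed.

Lemma path_exit (T : finType) (e : rel T) (A : pred T) x s :
  path e x s -> A x -> ~~ A (last x s) ->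
  exists a b, [/\ A a, ~~ A b & e a b].
Proof.
elim: s x => [|b s IHs] x /=; first by move=> _ ->.
case/andP=> exb es Ax; case Ab: (A b); first exact: IHs.
by move=> _; exists x, b; rewrite Ab.
Qed.

Lemma leq_card_bigcup (I T : finType) (P : pred I) (F : I -> {set T}) :
  (#|\bigcup_(i | P i) F i| <= \sum_(i | P i) #|F i|)%N.
Proof.
elim/big_rec2: _ => [|i n U _ leUn]; first by rewrite cards0.
by rewrite (leq_trans (leq_card_setU _ _).1) ?leq_add2l.
Qed.

Section ConnectedSets.
Variables (T : finType) (e : rel T).

Definition induced (A : {set T}) : rel T :=
  fun a b => [&& a \in A, b \in A & e a b].

Definition component (A : {set T}) (x : T) : {set T} :=
  [set y | connect (induced A) x y].

Definition max_component (A : {set T}) : nat :=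
  \max_(x in A) #|component A x|.

Definition connected_at (x : T) (A : {set T}) : bool :=
  (x \in A) && [forall y in A, connect (induced A) x y].

Definition boundary (A : {set T}) : {set T} :=
  [set b | (b \notin A) && [exists a in A, e a b]].

Definition connected_sets (x : T) (n : nat) : {set {set T}} :=
  [set A | connected_at x A && (#|A| == n)].

Lemma connect_induced_subset (A B : {set T}) :
  A \subset B -> subrel (connect (induced A)) (connect (induced B)).
Proof.
move=> sAB; apply: connect_sub => a b /and3P[aA bA eab]; apply: connect1.
by rewrite /induced (subsetP sAB _ aA) (subsetP sAB _ bA).
Qed.

Lemma component_subset (A : {set T}) x : x \in A -> component A x \subset A.
Proof.
move=> xA; apply/subsetP => y; rewrite inE => /connect_preserve; apply => //.
by move=> a b /and3P[].
Qed.

Lemma disjoint_boundary (A : {set T}) : [disjoint A & boundary A].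
Proof. by rewrite disjoints_subset; apply/subsetP => b bA; rewrite !inE bA. Qed.

Lemma connected_at_grow (A : {set T}) x k : x \in A ->
  (k < #|component A x|)%N ->
  exists2 B : {set T}, B \subset component A x & B \in connected_sets x k.+1.
Proof.
move=> xA; elim: k => [|k IHk] ltkC.
  exists [set x]; first by rewrite sub1set inE connect0.
  rewrite inE cards1 eqxx andbT /connected_at set11 /=.
  by apply/forall_inP => y; rewrite inE => /eqP ->; exact: connect0.
have [B sBC] := IHk (ltnW ltkC); rewrite inE => /andP[/andP[xB xB_conn] /eqP cardB].
have [y yC yB] : exists2 y, y \in component A x & y \notin B.
  by apply/subsetPn/negP => /subset_leq_card; rewrite cardB; lia.
move: (yC); rewrite inE => /connectP[s es ey].
have last_out : last x s \notin B by rewrite -ey.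
have [a [b [aB bB eab]]] := path_exit es xB last_out.
have sBbB := subsetUr [set b] B.
exists (b |: B).
  rewrite subUset sub1set sBC andbT inE.
  apply: connect_trans (connect1 eab).
  by have := subsetP sBC a aB; rewrite inE.
rewrite inE cardsU1 bB cardB eqxx andbT /connected_at !inE xB orbT /=.
apply/forall_inP => z; rewrite !inE => /orP[/eqP->|zB].
  apply: (@connect_trans _ _ a).
    exact: connect_induced_subset sBbB _ _ (forall_inP xB_conn a aB).
  by apply: connect1; case/and3P: eab => _ _ eab; rewrite /induced setU11 setU1r.
exact: connect_induced_subset sBbB _ _ (forall_inP xB_conn z zB).
Qed.

Lemma max_component_connected_set (A : {set T}) m :
  (m < max_component A)%N ->
  exists x, exists2 B : {set T}, B \subset A & B \in connected_sets x m.+1.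
Proof.
move=> ltm.
have /existsP[x /andP[xA ltmC]] :
    [exists x, (x \in A) && (m < #|component A x|)%N].
  apply: contraTT ltm => /existsPn none; rewrite -leqNgt.
  by apply/bigmax_leqP => x xA; move: (none x); rewrite xA /= -leqNgt.
have [B sBC cB] := connected_at_grow xA ltmC.
by exists x, B => //; apply: subset_trans sBC (component_subset xA).
Qed.

Lemma connected_at_subset_avoiding x (A B1 B2 : {set T}) :
  connected_at x B1 -> connected_at x B2 -> B1 \subset A ->
  [disjoint A & boundary B2] -> B1 \subset B2.
Proof.
case/andP=> xB1 B1_conn /andP[xB2 _] sB1A dAB2; apply/subsetP => y yB1.
apply: (connect_preserve _ (forall_inP B1_conn y yB1) xB2).
move=> a b /and3P[_ bB1 eab] aB2; apply/negPn/negP => bB2.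
have : b \in boundary B2 by rewrite inE bB2; apply/exists_inP; exists a.
by rewrite (disjointFr dAB2 (subsetP sB1A _ bB1)).
Qed.

Lemma sum_max_component_gt_le (R : numDomainType) (W : {set T} -> R) m :
  (forall S, 0 <= W S) ->
  \sum_(S : {set T} | (m < max_component S)%N) W S
    <= \sum_x \sum_(B in connected_sets x m.+1) \sum_(S : {set T} | B \subset S) W S.
Proof.
move=> W_ge0; rewrite big_mkcond /=.
pose cover_terms (S : {set T}) x :=
  \sum_(B in connected_sets x m.+1) if B \subset S then W S else 0.
have cover_ge0 S x : 0 <= cover_terms S x.
  by apply: sumr_ge0 => B _; case: ifP.
apply: (@le_trans _ _ (\sum_S \sum_x cover_terms S x)).
  apply: ler_sum => S _; case: ifP => [/max_component_connected_set[x [B sBS Bx]] | _].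
    rewrite (bigD1 x) //= {1}/cover_terms (bigD1 B) //= sBS -addrA lerDl addr_ge0 //.
      by apply: sumr_ge0 => B' _; case: ifP.
    by apply: sumr_ge0 => y _.
  by apply: sumr_ge0 => x _.
rewrite exchange_big /=; apply: ler_sum => x _; rewrite /cover_terms exchange_big /=.
by apply: ler_sum => B _; rewrite [X in _ <= X]big_mkcond lexx.
Qed.

Hypothesis e_sym : symmetric e.

Lemma connected_at_neighbour x (B : {set T}) a :
  connected_at x B -> (2 <= #|B|)%N -> a \in B -> exists2 c, c \in B & e a c.
Proof.
case/andP=> xB B_conn B2 aB.
have [y] : exists y, y \in B :\ a.
  by apply/card_gt0P; move: B2; rewrite (cardsD1 a B) aB; lia.
rewrite !inE => /andP[ya yB].
have sym_ind : symmetric (induced B).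
  by move=> i j; rewrite /induced e_sym; case: (i \in B); case: (j \in B).
have : connect (induced B) a y.
  rewrite (sym_connect_sym sym_ind).
  apply: (@connect_trans _ _ x); last exact: (forall_inP B_conn).
  by rewrite (sym_connect_sym sym_ind); exact: (forall_inP B_conn).
case/connectP=> [[|c s]] /=; first by move=> _ eya; rewrite eya eqxx in ya.
by case/andP=> /and3P[_ cB eac] _ _; exists c.
Qed.

Variable K : nat.
Hypothesis degree_le : forall a, (#|[set b | e a b]| <= K)%N.

Lemma card_boundary x (B : {set T}) : connected_at x B -> (2 <= #|B|)%N ->
  (#|boundary B| <= (K - 1) * #|B|)%N.
Proof.
move=> Bx B2.
have sub : boundary B \subset \bigcup_(a in B) ([set b | e a b] :\: B).
  apply/subsetP => b; rewrite inE => /andP[bB /exists_inP[a aB eab]].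
  by apply/bigcupP; exists a => //; rewrite !inE bB.
apply: leq_trans (subset_leq_card sub) _; apply: leq_trans (leq_card_bigcup _ _) _.
rewrite mulnC -sum_nat_const; apply: leq_sum => a aB.
have [c cB eac] := connected_at_neighbour Bx B2 aB.
have : (0 < #|[set b | e a b] :&: B|)%N by apply/card_gt0P; exists c; rewrite !inE eac.
by rewrite cardsD; have := degree_le a; lia.
Qed.

End ConnectedSets.

Section BernoulliWeight.
Variables (R : numDomainType) (T : finType).

Definition bernoulli_weight (q : R) (S : {set T}) : R :=
  q ^+ #|S| * (1 - q) ^+ #|~: S|.

Lemma bernoulli_weight_ge0 (q : R) (S : {set T}) :
  0 <= q -> q <= 1 -> 0 <= bernoulli_weight q S.
Proof. by move=> q0 q1; rewrite mulr_ge0 // exprn_ge0 // subr_ge0. Qed.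

Lemma sum_bernoulli_weight_subset_disjoint (q : R) (A B : {set T}) :
  [disjoint A & B] ->
  \sum_(S : {set T} | (A \subset S) && [disjoint S & B]) bernoulli_weight q S
   = q ^+ #|A| * (1 - q) ^+ #|B|.
Proof.
move=> dAB.
pose F i : R := if i \in B then 0 else q.
pose H i : R := if i \in A then 0 else 1 - q.
have -> : q ^+ #|A| * (1 - q) ^+ #|B| = \prod_i (F i + H i).
  rewrite -!prodr_const (big_mkcond (mem A)) (big_mkcond (mem B)) -big_split.
  apply: eq_bigr => i _; rewrite /F /H.
  case iA: (i \in A); case iB: (i \in B); rewrite /= ?iA ?iB.
  - by move: (disjointFr dAB iA); rewrite iB.
  - by rewrite mulr1 addr0.
  - by rewrite mul1r add0r.
  - by rewrite mulr1 addrC subrK.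
rewrite bigA_distr big_mkcond /=; apply: eq_bigr => S _.
case: ifP => [/andP[sAS dSB] | /negbT].
  rewrite /bernoulli_weight -(prodr_const (fun i => i \in S)).
  rewrite -(prodr_const (fun i => i \in ~: S)).
  rewrite [RHS](bigID (fun i => i \in S)) /=; congr (_ * _).
    by apply: eq_bigr => i iS; rewrite iS /F (disjointFr dSB iS).
  apply: eq_big => i; rewrite inE // => /negbTE iS.
  by rewrite /H iS; case: ifP => // /(subsetP sAS); rewrite iS.
rewrite negb_and => nS; apply/esym/eqP; rewrite prodf_seq_eq0; apply/hasP.
case/orP: nS => [/subsetPn[i iA iS] | ].
  by exists i; rewrite ?mem_index_enum //= (negbTE iS) /H iA.
rewrite -setI_eq0 => /set0Pn[i]; rewrite inE => /andP[iS iB].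
by exists i; rewrite ?mem_index_enum //= iS /F iB.
Qed.

Lemma sum_bernoulli_weight_superset (q : R) (A : {set T}) :
  \sum_(S : {set T} | A \subset S) bernoulli_weight q S = q ^+ #|A|.
Proof.
have dA0 : [disjoint A & set0] by rewrite disjoints_subset setC0 subsetT.
rewrite -[RHS]mulr1 -(expr0 (1 - q)) -(cards0 T) -sum_bernoulli_weight_subset_disjoint //.
by apply: eq_bigl => S; rewrite disjoints_subset setC0 subsetT andbT.
Qed.

Lemma sum_bernoulli_weight (q : R) : \sum_(S : {set T}) bernoulli_weight q S = 1.
Proof.
rewrite -(expr0 q) -(cards0 T) -sum_bernoulli_weight_superset.
by apply: eq_bigl => S; rewrite sub0set.
Qed.

End BernoulliWeight.

Lemma one_le_expR1_mul_pow_one_sub_inv (R : realType) (K : nat) : (1 <= K)%N ->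
  1 <= expR 1 * (1 - K%:R^-1) ^+ (K - 1) :> R.
Proof.
case: K => // k _; rewrite subn1 /=.
case: k => [|k]; first by rewrite expr0 mulr1; have := expR_ge1Dx (1 : R); lra.
set k1 := k.+1.
have k1_gt0 : 0 < k1%:R :> R by rewrite ltr0n.
have pow_le_e : (1 + k1%:R^-1) ^+ k1 <= expR 1 :> R.
  rewrite -[X in expR X](mulfV (lt0r_neq0 k1_gt0)) expRM_natl.
  by apply: lerXn2r; rewrite ?nnegrE ?expR_ge0 ?expR_ge1Dx // addr_ge0 ?invr_ge0 ?ltW.
have inv_prod : (1 + k1%:R^-1) * (1 - k1.+1%:R^-1) = 1 :> R.
  by rewrite -addn1 natrD; field; rewrite natr1 !pnatr_eq0.
have pow_ge0 : 0 <= (1 - k1.+1%:R^-1) ^+ k1 :> R.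
  by apply: exprn_ge0; rewrite subr_ge0 invf_le1 ?ler1n // ltr0n.
apply: (le_trans _ (ler_wpM2r pow_ge0 pow_le_e)).
by rewrite -exprMn inv_prod expr1n.
Qed.

Section ConnectedSetCount.
Variables (R : realType) (T : finType) (e : rel T) (K : nat).
Hypotheses (e_sym : symmetric e) (K_gt0 : (0 < K)%N).
Hypothesis degree_le : forall a, (#|[set b | e a b]| <= K)%N.

Lemma card_connected_sets_weight_le1 x n (q : R) :
  (2 <= n)%N -> 0 <= q -> q <= 1 ->
  #|connected_sets e x n|%:R * (q ^+ n * (1 - q) ^+ ((K - 1) * n)) <= 1.
Proof.
move=> n2 q0 q1.
have q'0 : 0 <= 1 - q by rewrite subr_ge0.
have q'1 : 1 - q <= 1 by rewrite lerBlDr lerDl.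
pose good (B S : {set T}) := (B \subset S) && [disjoint S & boundary e B].
rewrite mulrC mulr_natr -sumr_const.
apply: (@le_trans _ _ (\sum_(B in connected_sets e x n)
    \sum_(S | good B S) bernoulli_weight q S)).
  apply: ler_sum => B; rewrite inE => /andP[Bx /eqP cardB].
  rewrite sum_bernoulli_weight_subset_disjoint ?disjoint_boundary // cardB.
  rewrite ler_wpM2l ?exprn_ge0 // ler_wiXn2l // -cardB.
  by apply: card_boundary Bx _; rewrite ?cardB.
under eq_bigr do rewrite big_mkcond /=.
rewrite exchange_big /= -(@sum_bernoulli_weight R T q); apply: ler_sum => S _.
set good_at_S := [pred B | (B \in connected_sets e x n) && good B S].
case: (pickP good_at_S) => [B0 /andP[B0x gB0] | none]; last first.
  rewrite big1 ?bernoulli_weight_ge0 // => B Bx.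
  by move: (none B); rewrite /= Bx /= => ->.
rewrite (bigD1 B0) //= gB0 big1 ?addr0 // => B /andP[Bx neB].
case: ifP => // gB; case/eqP: neB.
move: Bx B0x; rewrite !inE => /andP[Bx _] /andP[B0x _].
case/andP: gB => sBS dSB; case/andP: gB0 => sB0S dSB0.
apply/eqP; rewrite eqEsubset.
by rewrite (connected_at_subset_avoiding Bx B0x sBS dSB0)
           (connected_at_subset_avoiding B0x Bx sB0S dSB).
Qed.

Lemma card_connected_sets_le x n : (2 <= n)%N ->
  #|connected_sets e x n|%:R <= (expR 1 * K%:R) ^+ n :> R.
Proof.
move=> n2; set q : R := K%:R^-1.
have K_pos : 0 < K%:R :> R by rewrite ltr0n.
have q0 : 0 <= q by rewrite invr_ge0 ltW.
have q1 : q <= 1 by rewrite invf_le1 // ler1n.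
have weight_ge1 : 1 <= (expR 1 * K%:R) ^+ n * (q ^+ n * (1 - q) ^+ ((K - 1) * n)).
  rewrite mulrA -exprMn -mulrA mulfV ?lt0r_neq0 // mulr1 exprM -exprMn.
  exact/exprn_ege1/one_le_expR1_mul_pow_one_sub_inv.
have := card_connected_sets_weight_le1 x n2 q0 q1.
set N := _%:R; set c := q ^+ n * _ => Nc_le1.
apply: (@le_trans _ _ (N * ((expR 1 * K%:R) ^+ n * c))); first by rewrite ler_peMr.
by rewrite mulrCA ler_piMr // exprn_ge0 // mulr_ge0 ?expR_ge0 ?ltW.
Qed.

Lemma sum_max_component_gt (q : R) m : (1 <= m)%N -> 0 <= q -> q <= 1 ->
  \sum_(S : {set T} | (m < max_component e S)%N) bernoulli_weight q S
    <= #|T|%:R * (expR 1 * q * K%:R) ^+ m.+1.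
Proof.
move=> m1 q0 q1.
have W_ge0 (S : {set T}) : 0 <= bernoulli_weight q S by exact: bernoulli_weight_ge0.
apply: le_trans (sum_max_component_gt_le e m W_ge0) _.
rewrite mulr_natl -sumr_const; apply: ler_sum => x _.
under eq_bigr => B do rewrite sum_bernoulli_weight_superset.
rewrite (eq_bigr (fun=> q ^+ m.+1)); last by move=> B; rewrite inE => /andP[_ /eqP->].
rewrite sumr_const -[_ *+ _]mulr_natl [expR 1 * q * _]mulrAC exprMn.
by apply: ler_wpM2r; [exact: exprn_ge0 | exact: card_connected_sets_le].
Qed.

End ConnectedSetCount.

Lemma sum_by_fibers (R : nmodType) (I J : finType) (f : I -> J) (F : I -> R)
    (Q : pred J) :
  \sum_(i | Q (f i)) F i = \sum_(j | Q j) \sum_(i | f i == j) F i.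
Proof.
rewrite (partition_big f Q) //; apply: eq_bigr => j Qj; apply: eq_bigl => i.
by case: eqP => [->|]; rewrite ?Qj ?andbF.
Qed.

Lemma gadj_sym (R : realType) p (G : 'M[R]_p) delta : symmetric (gadj G delta).
Proof. by move=> i j; rewrite /gadj eq_sym orbC. Qed.

Theorem lemma1 (R : realType) (p K m0 : nat) (G : 'M[R]_p) (delta eps : R)
  (Omega : finType) (P : Omega -> R) (beta : Omega -> 'I_p -> R) :
  (1 <= K)%N -> (1 <= m0)%N -> 0 < delta -> 0 < eps -> eps <= 1 ->
  (forall w, 0 <= P w) -> \sum_w P w = 1 ->
  (forall S : {set 'I_p},
      \sum_(w | supp (beta w) == S) P w = eps ^+ #|S| * (1 - eps) ^+ (p - #|S|)) ->
  K_sparse G delta K ->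
  \sum_(w | (m0 < m0star (supp (beta w)) G delta)%N) P w
    <= p%:R * (expR 1 * eps * K%:R) ^+ m0.+1.
Proof.
move=> K_gt0 m0_gt0 _ eps_gt0 eps_le1 _ _ law K_sparse_G.
have law_weight S : \sum_(w | supp (beta w) == S) P w = bernoulli_weight eps S.
  rewrite law; congr (_ * _ ^+ _); have := cardsC S; rewrite card_ord; lia.
rewrite (sum_by_fibers (fun w => supp (beta w)) P
           (fun S => m0 < m0star S G delta)%N).
under eq_bigr => S _ do rewrite law_weight.
rewrite -[p in p%:R](card_ord p).
exact: sum_max_component_gt (gadj_sym G delta) K_gt0 K_sparse_G _ _
  m0_gt0 (ltW eps_gt0) eps_le1.
Qed.
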